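(* In a $2^K$ factorial experiment, for nonempty $\mathcal F_+\subseteq\mathcal P_K$ and any $\mathcal F_+'\subseteq\mathcal P_K'$, the OLS outputs of the regression $Y_i\sim1+\sum_{\mathcal K\in\mathcal F_+}Z_{i,\mathcal K}+\sum_{\mathcal K\in\mathcal F_+'}Z_{i,\mathcal K}x_i$ satisfy $\tilde\tau_{r,+}=C_{S,+}\hat Y_{r,S}$ and $\tilde\Omega_{r,+}=C_{S,+}\hat\Psi_{r,S}C_{S,+}^T$.
   Context: $2^K$ factorial experiment: $Q=2^K$ treatment levels $(z_1,\dots,z_K)\in\{-1,+1\}^K$ identified with $1,\dots,Q$ lexicographically ($-1$ before $+1$). $N$ units with outcomes $Y_i$, covariates $x_i\in\mathbb R^J$ ($\sum_ix_i=0$), treatment indicator vector $t_i\in\{0,1\}^Q$, and factor levels $Z_{ik}\in\{-1,+1\}$. $\mathcal P_K$: nonempty subsets of $\{1,\dots,K\}$; $\mathcal P_K'=\{\emptyset\}\cup\mathcal P_K$; $Z_{i,\mathcal K}=\prod_{k\in\mathcal K}Z_{ik}$ with $Z_{i,\emptyset}=1$ (so $Z_{i,\emptyset}x_i=x_i$). $c_{\mathcal K}\in\mathbb R^Q$ has entry $2^{-(K-1)}\prod_{k\in\mathcal K}z_k$ at level $(z_1,\dots,z_K)$ (so $c_\emptyset=2^{-(K-1)}1_Q$). $C_{S,+}$ has rows $c_{\mathcal K}^T$, $\mathcal K\in\mathcal F_+$; $C_{S,-}$ has rows $c_{\mathcal K}^T$, $\mathcal K\in\mathcal P_K\setminus\mathcal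 F_+$ (the zero row $0^T$ if empty); $C'_{S,-}$ has rows $c_{\mathcal K}^T$, $\mathcal K\in\mathcal P_K'\setminus\mathcal F_+'$ (zero row if empty). OLS outputs: $\tilde\tau_{r,+}$ is the vector of 2 times the OLS coefficients of $Z_{i,\mathcal K}$, $\mathcal K\in\mathcal F_+$ (ordered as rows of $C_{S,+}$), and $\tilde\Omega_{r,+}$ its Eicker–Huber–White covariance estimator (4 times the corresponding block of $(X^TX)^{-1}X^T\mathrm{diag}(\hat\epsilon_i^2)X(X^TX)^{-1}$, $X$ design matrix, $\hat\epsilon_i$ residuals). Restricted least squares: $\chi_{L,i}=(t_i^T,(t_i\otimes x_i)^T)^T$, $\chi_L$ the matrix with rows $\chi_{L,i}^T$ ($\chi_L^T\chi_L$ nonsingular), $\theta=(\theta_Y^T,\theta_\gamma^T)^T$, $\theta_Y\in\mathbb R^Q$, $\theta_\gamma\in\mathbb R^{JQ}$. With restriction $R\theta=0$ given by $C_{S,-}\theta_Y=0$ and $(C'_{S,-}\otimes I_J)\theta_\gamma=0$ (dropping vacuous zero rows), $\hat\theta_r=\arg\min_\theta\sum_i(Y_i-\chi_{L,i}^T\theta)^2$ s.t. $R\theta=0$, and $\hat Y_{r,S}$ is its $\theta_Y$-part. With RLS residuals $\hat\epsilon_{r,i}$, $M_r=(\chi_L^T\chi_L)^{-1}R^T\{R(\chi_L^T\chi_L)^{-1}R^T\}^{-1}$ and $\hat\Sigma_r=(\chi_L^T\chi_L)^{-1}\chi_L^T\mathrm{diag}(\hat\epsilon_{r,i}^2)\chi_L(\chi_L^T\chi_L)^{-1}$,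 $\hat\Psi_{r,S}$ is the upper-left $Q\times Q$ block of $(I-M_rR)\hat\Sigma_r(I-M_rR)^T$. *)

From HB Require Import structures.
From mathcomp Require Import all_boot all_order all_algebra.
Set Implicit Arguments. Unset Strict Implicit. Unset Printing Implicit Defensive.
Import Order.TTheory GRing.Theory Num.Theory.
Local Open Scope ring_scope.

(* Treatment levels are 'I_(2^K); level q (as a nat,
   0 <= q < 2^K) corresponds to (z_1,...,z_K) with z_{k+1} = +1 iff bit
   (K-1-k) of q is set (lexicographic order, -1 before +1, factor 1 most
   significant).  Factors are indexed by k : 'I_K (factor k+1 of the paper). *)

Section Factorial.
Variable R : realFieldType.

Definition zlev (K : nat) (q : nat) (k : 'I_K) : R :=
  if odd (q %/ 2 ^ (K.-1 - k)) then 1 else -1.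

Definition cK (K : nat) (S : {set 'I_K}) (q : nat) : R :=
  2 / 2 ^+ K * \prod_(k in S) zlev q k.

Definition nthS (K : nat) (F : {set {set 'I_K}}) (a : nat) : {set 'I_K} :=
  nth set0 (enum F) a.

Variables (N J K : nat).
Variables (W : 'I_N -> 'I_(2 ^ K)) (x : 'M[R]_(N, J)) (Y : 'cV[R]_N).
Variables (Fp Fp' : {set {set 'I_K}}).

Definition tind (i : 'I_N) (q : nat) : R := ((W i : nat) == q)%:R.

Definition ZS (i : 'I_N) (S : {set 'I_K}) : R := \prod_(k in S) zlev (W i) k.

(* x_{ij} with j given as a nat (0 outside range; only used for j < J) *)
Definition xn (i : 'I_N) (j : nat) : R :=
  if insub j is Some j' then x i j' else 0.

Definition ncol := ((1 + #|Fp|) + #|Fp'| * J)%N.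

Definition Xdes : 'M[R]_(N, ncol) :=
  \matrix_(i, c)
    match split c with
    | inl a => match split a with
               | inl _ => 1
               | inr b => ZS i (nthS Fp b)
               end
    | inr b => ZS i (nthS Fp' (b %/ J)) * xn i (b %% J)
    end.

Definition beta_ols : 'cV[R]_ncol := invmx (Xdes^T *m Xdes) *m Xdes^T *m Y.
Definition res_ols : 'cV[R]_N := Y - Xdes *m beta_ols.

Definition V_ehw : 'M[R]_ncol :=
  invmx (Xdes^T *m Xdes) *m Xdes^T *m diag_mx (\row_i (res_ols i 0) ^+ 2)
    *m Xdes *m invmx (Xdes^T *m Xdes).

Definition posZ (a : 'I_#|Fp|) : 'I_ncol := lshift _ (rshift 1 a).

Definition tau_r_plus : 'cV[R]_#|Fp| := \col_a (2 * beta_ols (posZ a) 0).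
Definition Omega_r_plus : 'M[R]_#|Fp| := \matrix_(a, b) (4 * V_ehw (posZ a) (posZ b)).

Definition CSplus : 'M[R]_(#|Fp|, 2 ^ K) := \matrix_(a, q) cK (nthS Fp a) q.

Definition Qd := (2 ^ K)%N.
Definition ntheta := (Qd + Qd * J)%N.

(* chi_{L,i} = (t_i, t_i (x) x_i); Kronecker index (q, j) |-> q * J + j *)
Definition chiL : 'M[R]_(N, ntheta) :=
  \matrix_(i, c)
    match split c with
    | inl q => tind i q
    | inr k => tind i (k %/ J) * xn i (k %% J)
    end.

Definition Fm : {set {set 'I_K}} := [set S | (S != set0) && (S \notin Fp)].
Definition Fm' : {set {set 'I_K}} := [set S | S \notin Fp'].

(* R theta = 0  <=>  C_{S,-} theta_Y = 0  and  (C'_{S,-} (x) I_J) theta_gamma = 0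
   (vacuous zero rows dropped: empty index sets give no rows) *)
Definition Rres : 'M[R]_(#|Fm| + #|Fm'| * J, ntheta) :=
  \matrix_(r, c)
    match split r, split c with
    | inl a, inl q => cK (nthS Fm a) q
    | inr b, inr k => if (b %% J == k %% J)%N then cK (nthS Fm' (b %/ J)) (k %/ J)
                      else 0
    | _, _ => 0
    end.

Definition RSS (th : 'cV[R]_ntheta) : R :=
  \sum_i ((Y - chiL *m th) i 0) ^+ 2.

Definition is_RLS (th : 'cV[R]_ntheta) : Prop :=
  Rres *m th = 0 /\ forall th', Rres *m th' = 0 -> RSS th <= RSS th'.

Definition Gram : 'M[R]_ntheta := chiL^T *m chiL.

Definition Mr : 'M[R]_(ntheta, #|Fm| + #|Fm'| * J) :=
  invmx Gram *m Rres^T *m invmx (Rres *m invmx Gram *m Rres^T).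

Definition Sigma_r (th : 'cV[R]_ntheta) : 'M[R]_ntheta :=
  invmx Gram *m chiL^T *m diag_mx (\row_i ((Y - chiL *m th) i 0) ^+ 2)
    *m chiL *m invmx Gram.

Definition Yhat_rS (th : 'cV[R]_ntheta) : 'cV[R]_Qd := usubmx th.

Definition Psi_rS (th : 'cV[R]_ntheta) : 'M[R]_Qd :=
  ulsubmx ((1%:M - Mr *m Rres) *m Sigma_r th *m (1%:M - Mr *m Rres)^T).

End Factorial.

From HB Require Import structures.
From mathcomp Require Import all_boot all_order all_algebra.
From mathcomp Require Import zify lra.
Import Order.TTheory GRing.Theory Num.Theory.
Local Open Scope ring_scope.

Set Implicit Arguments. Unset Strict Implicit. Unset Printing Implicit Defensive.

(* The constraint R theta = 0 says exactly that theta lies in the range of the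
   matrix B whose columns are the Walsh vectors q |-> prod_{k in S} z_k(q) of the
   regressors 1, Z_S (S in F+) and Z_S x (S in F+'): Walsh vectors of distinct sets
   are orthogonal, so R B = 0, B and R have full rank, and their ranks add up to
   dim theta.  Since moreover chi_L B is the OLS design matrix X, restricted least
   squares is OLS reparametrised by theta = B beta, and
   (I - M_r R) (chi_L^T chi_L)^-1 chi_L^T = B (X^T X)^-1 X^T, which turns the RLS
   sandwich covariance into B V_ehw B^T.  Finally c_S = 2^(1-K) w_S makes C_{S,+}
   times the first Q rows of B twice the selector of the F+ coefficients. *)

Lemma split_lshift m n (i : 'I_m) : split (lshift n i) = inl i.
Proof. exact: (unsplitK (inl i)). Qed.

Lemma split_rshift m n (j : 'I_n) : split (rshift m j) = inr j.
Proof. exact: (unsplitK (inr j)). Qed.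

Lemma ulsubmx_mul_tr (R : pzRingType) m1 m2 n (B : 'M[R]_(m1 + m2, n)) (V : 'M[R]_n) :
  ulsubmx (B *m V *m B^T) = usubmx B *m V *m (usubmx B)^T.
Proof. by rewrite /ulsubmx -!mul_usub_mx -mulmx_lsub trmx_usub. Qed.

Lemma rowsub_conj (R : pzRingType) m n (f : 'I_m -> 'I_n) (M : 'M[R]_n) :
  rowsub f 1%:M *m M *m (rowsub f 1%:M)^T = mxsub f f M.
Proof. by apply/matrixP => i j; rewrite -rowsubE trmx_mxsub trmx1 mulmx_colsub mulmx1 !mxE. Qed.

Lemma row_free_mul (F : fieldType) m n p (A : 'M[F]_(m, n)) (B : 'M[F]_(n, p)) :
  row_free A -> row_free B -> row_free (A *m B).
Proof.
move=> freeA freeB; apply: inj_row_free => v /eqP.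
by rewrite mulmxA mulmx_free_eq0 // mulmx_free_eq0 // => /eqP.
Qed.

Lemma scalar_gram_row_free (F : fieldType) m n (A : 'M[F]_(m, n)) c :
  A *m A^T = c%:M -> c != 0 -> row_free A.
Proof.
move=> gramA c0; apply/row_freeP; exists (c^-1 *: A^T).
by rewrite -scalemxAr gramA scale_scalar_mx mulVf.
Qed.

Lemma eq_binary_digits (K q q' : nat) : (q < 2 ^ K)%N -> (q' < 2 ^ K)%N ->
  (forall i, (i < K)%N -> odd (q %/ 2 ^ i) = odd (q' %/ 2 ^ i)) -> q = q'.
Proof.
elim: K q q' => [|K IH] q q' ltq ltq' digits.
  by move: ltq ltq'; rewrite expn0 !ltnS !leqn0 => /eqP-> /eqP->.
have low : odd q = odd q' by have := digits 0%N isT; rewrite !divn1.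
have high : (q %/ 2 = q' %/ 2)%N.
  apply: IH; rewrite ?ltn_divLR -?expnSr // => i ltiK.
  by rewrite -!divnMA -expnS; apply: digits.
by rewrite (divn_eq q 2) (divn_eq q' 2) high !modn2 low.
Qed.

Lemma big_ord_mulJ (R : Type) (idx : R) (op : Monoid.law idx) (Q J : nat)
    (F : nat -> R) :
  \big[op/idx]_(k < Q * J) F k = \big[op/idx]_(q < Q) \big[op/idx]_(j < J) F (q * J + j)%N.
Proof.
rewrite -(big_mkord xpredT) big_nat_mul big_mkord; apply: eq_bigr => q _.
rewrite -{1}[(q * J)%N]add0n big_addn mulSn addnK big_mkord.
by apply: eq_bigr => j _; rewrite addnC.
Qed.

Section Walsh.
Variables (R : realFieldType) (K : nat).

Definition walsh (S : {set 'I_K}) (q : nat) : R := \prod_(k in S) zlev R q k.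

Definition high_factors (q : nat) : {set 'I_K} := [set k : 'I_K | odd (q %/ 2 ^ (K.-1 - k))].

Lemma card_subsets : #|{set 'I_K}| = (2 ^ K)%N.
Proof. by rewrite -cardsT -powersetT card_powerset cardsT card_ord. Qed.

Definition sign (b : bool) : R := if b then 1 else -1.

Lemma walshE S q : walsh S q = \prod_(k in S) sign (k \in high_factors q).
Proof. by apply: eq_bigr => k _; rewrite inE. Qed.

Lemma high_factors_inj : injective (fun q : 'I_(2 ^ K) => high_factors q).
Proof.
move=> q q' /setP eq_qq'; apply/val_inj/(@eq_binary_digits K) => [||i ltiK]; try exact: ltn_ord.
have ltK : (K.-1 - i < K)%N by lia.
have := eq_qq' (Ordinal ltK); rewrite !inE /=.
by have -> : (K.-1 - (K.-1 - i) = i)%N by lia.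
Qed.

Lemma sum_high_factors (F : {set 'I_K} -> R) :
  \sum_(q < 2 ^ K) F (high_factors q) = \sum_A F A.
Proof.
rewrite -(big_imset _ (in2W high_factors_inj)) /=.
have -> : [set high_factors q | q : 'I_(2 ^ K)] = setT.
  apply/eqP; rewrite eqEcard subsetT cardsT card_imset ?card_ord; last exact: high_factors_inj.
  by rewrite /= card_subsets.
by apply: eq_bigl => A; rewrite in_setT.
Qed.

Lemma sum_prod_sign (T : {set 'I_K}) : T != set0 ->
  \sum_(A : {set 'I_K}) \prod_(k in T) sign (k \in A) = 0.
Proof.
case/set0Pn=> k0 k0T.
pose flip (A : {set 'I_K}) : {set 'I_K} := [set k | (k \in A) != (k == k0)].
have flipK : involutive flip.
  by move=> A; apply/setP=> k; rewrite !inE; case: (k \in A); case: (k == k0).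
set s := (X in X = 0).
suff : s = - s by lra.
rewrite {1}/s (reindex_inj (can_inj flipK)) -sumrN; apply: eq_bigr => A _.
rewrite (bigD1 k0) // [in RHS](bigD1 k0) //= -mulNr; congr (_ * _).
  by rewrite inE eqxx; case: (k0 \in A); rewrite /sign ?opprK.
by apply: eq_bigr => k /andP[_ /negbTE nek]; rewrite /flip inE nek; case: (k \in A).
Qed.

Lemma walshM S S' q : walsh S q * walsh S' q = walsh [set k | (k \in S) != (k \in S')] q.
Proof.
rewrite /walsh !(big_mkcond (fun k => k \in _)) -big_split /=.
apply: eq_bigr => k _; rewrite inE.
have zlev_sq : zlev R q k * zlev R q k = 1 by rewrite /zlev; case: ifP; rewrite ?mulrNN mulr1.
by case: (k \in S); case: (k \in S'); rewrite /= ?mulr1 ?mul1r.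
Qed.

Lemma walsh_orth S S' :
  \sum_(q < 2 ^ K) walsh S q * walsh S' q = if S == S' then (2 ^ K)%:R else 0.
Proof.
under eq_bigr do rewrite walshM walshE.
rewrite (sum_high_factors (fun A => \prod_(k in [set k | (k \in S) != (k \in S')]) sign (k \in A))).
case: eqP => [<- | neSS'].
  have -> : [set k | (k \in S) != (k \in S)] = set0 by apply/setP=> k; rewrite !inE eqxx.
  under eq_bigr do rewrite big_set0.
  by rewrite sumr_const card_subsets.
apply: sum_prod_sign; apply: contra_not_neq neSS' => /setP sym0.
by apply/setP => k; have := sym0 k; rewrite !inE => /negbFE/eqP.
Qed.

Lemma cK_walsh S q : cK R S q = 2 / 2 ^+ K * walsh S q.
Proof. by []. Qed.

Lemma walsh0 q : walsh set0 q = 1.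
Proof. by rewrite /walsh big_set0. Qed.

End Walsh.

Section KroneckerIdentity.
Variables (R : pzRingType) (J : nat).

(* [kron_id f] is (f b q)_(b,q) (x) I_J, entry ((b, j), (q, j')) sitting at
   (b * J + j, q * J + j') as in [chiL] and [Rres]. *)
Definition kron_id m n (f : nat -> nat -> R) : 'M[R]_(m * J, n * J) :=
  \matrix_(r, c) if (r %% J == c %% J)%N then f (r %/ J)%N (c %/ J)%N else 0.

Lemma ord_mulJ_gt0 m (r : 'I_(m * J)) : (0 < J)%N.
Proof. by case: J r => [|//] [r]; rewrite muln0. Qed.

Lemma ord_mulJ_div m (r : 'I_(m * J)) : (r %/ J < m)%N.
Proof. by rewrite ltn_divLR ?(ord_mulJ_gt0 r). Qed.

Lemma kron_index_div q j : (j < J)%N -> ((q * J + j) %/ J = q)%N.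
Proof. by move=> ltjJ; rewrite divnMDl ?divn_small ?addn0 //; apply: leq_ltn_trans ltjJ. Qed.

Lemma kron_index_mod q j : (j < J)%N -> ((q * J + j) %% J = j)%N.
Proof. by move=> ltjJ; rewrite modnMDl modn_small. Qed.

Lemma eq_kron_id m n f g : f =2 g -> kron_id m n f = kron_id m n g.
Proof. by move=> fg; apply/matrixP => r c; rewrite !mxE fg. Qed.

Lemma sum_mod_eq n j (g : nat -> R) : (j < J)%N ->
  \sum_(k < n * J) (if (j == k %% J)%N then g k else 0) = \sum_(q < n) g (q * J + j)%N.
Proof.
move=> ltjJ; rewrite (big_ord_mulJ _ _ _ (fun k => if (j == k %% J)%N then g k else 0)).
apply: eq_bigr => q _.
rewrite (bigD1 (Ordinal ltjJ)) //= kron_index_mod // eqxx big1 ?addr0 // => j' nej'.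
rewrite kron_index_mod //; case: eqP => // eqjj'.
by case/eqP: nej'; apply: val_inj.
Qed.

Lemma kron_id_mul_tr m n p f g :
  kron_id m n f *m (kron_id p n g)^T = kron_id m p (fun b b' => \sum_(q < n) f b q * g b' q).
Proof.
apply/matrixP => r r'; have Jgt0 := ord_mulJ_gt0 r; rewrite !mxE.
pose h k := f (r %/ J)%N (k %/ J)%N *
  (if (r' %% J == r %% J)%N then g (r' %/ J)%N (k %/ J)%N else 0).
transitivity (\sum_(k < n * J) if (r %% J == k %% J)%N then h k else 0).
  by apply: eq_bigr => k _; rewrite /h !mxE; case: eqP => [->|]; rewrite ?mul0r.
rewrite (sum_mod_eq _ h) ?ltn_mod // /h; under eq_bigr do rewrite kron_index_div ?ltn_mod //.
rewrite eq_sym; case: eqP => // _.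
by rewrite big1 // => q _; rewrite mulr0.
Qed.

Lemma kron_id_eq0 m p f : (forall b b', (b < m)%N -> (b' < p)%N -> f b b' = 0) ->
  kron_id m p f = 0.
Proof. by move=> f0; apply/matrixP => r c; rewrite !mxE f0 ?ord_mulJ_div ?if_same. Qed.

Lemma kron_id_scalar m f c :
  (forall b b', (b < m)%N -> (b' < m)%N -> f b b' = (b == b')%:R * c) ->
  kron_id m m f = c%:M.
Proof.
move=> fc; apply/matrixP => r r'; rewrite !mxE fc ?ord_mulJ_div //.
have -> : (r == r') = (r %% J == r' %% J)%N && (r %/ J == r' %/ J)%N.
  apply/eqP/andP => [-> // | [/eqP eq_mod /eqP eq_div]].
  by apply: val_inj; rewrite /= (divn_eq r J) (divn_eq r' J) eq_mod eq_div.
by case: eqP => _; case: eqP => _; rewrite /= ?mul1r ?mul0r.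
Qed.

End KroneckerIdentity.

Section WalshDesign.
Variables (R : realFieldType) (K J : nat).

Definition walsh_mx m (s : 'I_m -> {set 'I_K}) : 'M[R]_(m, 2 ^ K) :=
  \matrix_(a, q) walsh R (s a) q.

Lemma walsh_mx_mul_tr m p (s : 'I_m -> {set 'I_K}) (t : 'I_p -> {set 'I_K}) :
  walsh_mx s *m (walsh_mx t)^T = \matrix_(a, b) ((s a == t b)%:R * (2 ^ K)%:R).
Proof.
apply/matrixP => a b; rewrite !mxE; under eq_bigr do rewrite !mxE.
by rewrite walsh_orth; case: eqP; rewrite ?mul1r ?mul0r.
Qed.

Definition walsh_design m1 m2 (s1 : 'I_m1 -> {set 'I_K}) (s2 : nat -> {set 'I_K}) :
    'M[R]_(m1 + m2 * J, 2 ^ K + 2 ^ K * J) :=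
  block_mx (walsh_mx s1) 0 0 (kron_id J m2 (2 ^ K) (fun b q => walsh R (s2 b) q)).
Arguments walsh_design {m1} m2 s1 s2.

Lemma walsh_design_mul_tr m1 m2 p1 p2 (s1 : 'I_m1 -> {set 'I_K}) (s2 : nat -> {set 'I_K})
    (t1 : 'I_p1 -> {set 'I_K}) (t2 : nat -> {set 'I_K}) :
  walsh_design m2 s1 s2 *m (walsh_design p2 t1 t2)^T =
  block_mx (walsh_mx s1 *m (walsh_mx t1)^T) 0 0
    (kron_id J m2 p2 (fun b b' => (s2 b == t2 b')%:R * (2 ^ K)%:R)).
Proof.
rewrite tr_block_mx mulmx_block !trmx0 !mulmx0 !mul0mx !addr0 !add0r kron_id_mul_tr.
by congr block_mx; apply: eq_kron_id => b b'; rewrite walsh_orth; case: eqP; rewrite ?mul1r ?mul0r.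
Qed.

Lemma walsh_design_orth m1 m2 p1 p2 (s1 : 'I_m1 -> {set 'I_K}) (s2 : nat -> {set 'I_K})
    (t1 : 'I_p1 -> {set 'I_K}) (t2 : nat -> {set 'I_K}) :
  (forall a a', s1 a != t1 a') ->
  (forall b b', (b < m2)%N -> (b' < p2)%N -> s2 b != t2 b') ->
  walsh_design m2 s1 s2 *m (walsh_design p2 t1 t2)^T = 0.
Proof.
move=> neq1 neq2; rewrite walsh_design_mul_tr kron_id_eq0 => [|b b' ltb ltb'].
  rewrite walsh_mx_mul_tr -block_mx0; congr block_mx.
  by apply/matrixP => a a'; rewrite !mxE (negbTE (neq1 a a')) mul0r.
by rewrite (negbTE (neq2 b b' ltb ltb')) mul0r.
Qed.

Lemma walsh_design_gram m1 m2 (s1 : 'I_m1 -> {set 'I_K}) (s2 : nat -> {set 'I_K}) :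
  injective s1 ->
  (forall b b', (b < m2)%N -> (b' < m2)%N -> s2 b = s2 b' -> b = b') ->
  walsh_design m2 s1 s2 *m (walsh_design m2 s1 s2)^T = (2 ^ K)%:R%:M.
Proof.
move=> inj1 inj2; rewrite walsh_design_mul_tr scalar_mx_block.
rewrite (@kron_id_scalar _ _ _ _ (2 ^ K)%:R) => [|b b' ltb ltb'].
  rewrite walsh_mx_mul_tr; congr block_mx.
  by apply/matrixP => a a'; rewrite !mxE (inj_eq inj1) mulr_natl.
suff -> : (s2 b == s2 b') = (b == b') by [].
by apply/eqP/eqP => [/(inj2 _ _ ltb ltb') | ->].
Qed.

End WalshDesign.
Arguments walsh_design {R K} J {m1} m2 s1 s2.



Section SquaredNorm.
Variable R : realFieldType.

Definition sqnorm n (u : 'cV[R]_n) : R := \sum_i u i 0 ^+ 2.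

Lemma sqnormE n (u : 'cV[R]_n) : sqnorm u = (u^T *m u) 0 0.
Proof. by rewrite mxE; apply: eq_bigr => i _; rewrite mxE expr2. Qed.

Lemma sqnorm_ge0 n (u : 'cV[R]_n) : 0 <= sqnorm u.
Proof. by apply: sumr_ge0 => i _; apply: sqr_ge0. Qed.

Lemma sqnorm_eq0 n (u : 'cV[R]_n) : (sqnorm u == 0) = (u == 0).
Proof.
apply/idP/eqP => [/eqP u0 | ->]; last by rewrite /sqnorm big1 // => i _; rewrite mxE expr0n.
apply/colP => i; apply/eqP; rewrite mxE -sqrf_eq0.
by have /psumr_eq0P -> // : sqnorm u = 0 by []; move=> j _; apply: sqr_ge0.
Qed.

Lemma sqnormD_orth N p (X : 'M[R]_(N, p)) (e : 'cV[R]_N) (d : 'cV[R]_p) :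
  X^T *m e = 0 -> sqnorm (e + X *m d) = sqnorm e + sqnorm (X *m d).
Proof.
move=> Xe0; have eX0 : e^T *m X = 0 by rewrite -[X]trmxK -trmx_mul Xe0 trmx0.
rewrite !sqnormE (raddfD trmx) /= !mulmxDl !mulmxDr !trmx_mul.
by rewrite (mulmxA e^T) eX0 -(mulmxA d^T X^T e) Xe0 mulmx0 mul0mx addr0 add0r !mxE.
Qed.

Lemma mul_tr_unit m n (A : 'M[R]_(m, n)) : row_free A -> A *m A^T \in unitmx.
Proof.
move=> freeA; rewrite -row_free_unit; apply: inj_row_free => v vAA0.
suff /eqP : v *m A = 0 by rewrite mulmx_free_eq0 // => /eqP.
apply: trmx_inj; rewrite trmx0; apply/eqP; rewrite -sqnorm_eq0 sqnormE trmxK.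
by rewrite trmx_mul !mulmxA -(mulmxA v) vAA0 mul0mx mxE.
Qed.

Lemma ols_normal_eq N p (X : 'M[R]_(N, p)) (Y : 'cV[R]_N) : row_free X^T ->
  X^T *m (Y - X *m (invmx (X^T *m X) *m X^T *m Y)) = 0.
Proof.
move=> freeXt; have XXu : X^T *m X \in unitmx by rewrite -{2}[X]trmxK mul_tr_unit.
by rewrite mulmxBr !mulmxA mulmxV // mul1mx subrr.
Qed.

Lemma ols_argmin_unique N p (X : 'M[R]_(N, p)) (Y : 'cV[R]_N) (g : 'cV[R]_p) :
  row_free X^T ->
  let beta := invmx (X^T *m X) *m X^T *m Y in
  sqnorm (Y - X *m g) <= sqnorm (Y - X *m beta) -> g = beta.
Proof.
move=> freeXt beta le_g.
have split_res : Y - X *m g = (Y - X *m beta) + X *m (beta - g).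
  by rewrite mulmxBr addrA subrK.
move: le_g; rewrite split_res sqnormD_orth ?ols_normal_eq // -lerBrDl subrr => le0.
have : sqnorm (X *m (beta - g)) == 0 by rewrite eq_le le0 sqnorm_ge0.
rewrite sqnorm_eq0 => /eqP /(congr1 trmx); rewrite trmx0 trmx_mul => /eqP.
rewrite mulmx_free_eq0 // => /eqP /(congr1 trmx); rewrite trmxK trmx0 => /eqP.
by rewrite subr_eq0 => /eqP.
Qed.

End SquaredNorm.

Section RestrictedLeastSquares.
Variables (R : realFieldType) (N n p r : nat).
Variables (chi : 'M[R]_(N, n)) (Rm : 'M[R]_(r, n)) (B : 'M[R]_(n, p)).
Hypotheses (chi_gram_unit : chi^T *m chi \in unitmx) (Rm_B : Rm *m B = 0).
Hypotheses (Rm_free : row_free Rm) (B_free : row_free B^T) (dim_pr : (p + r)%N = n).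

Local Notation Gi := (invmx (chi^T *m chi)).
Local Notation X := (chi *m B).
Local Notation Mr := (Gi *m Rm^T *m invmx (Rm *m Gi *m Rm^T)).
Local Notation Proj := (1%:M - Mr *m Rm).

Lemma chi_free : row_free chi^T.
Proof. by apply/row_freeP; exists (chi *m Gi); rewrite mulmxA mulmxV. Qed.

Lemma X_free : row_free X^T.
Proof. by rewrite trmx_mul row_free_mul ?chi_free. Qed.

Lemma Gi_sym : Gi^T = Gi.
Proof. by rewrite trmx_inv trmx_mul trmxK. Qed.

Lemma constraint_kernel_factor m (Z : 'M[R]_(n, m)) : Rm *m Z = 0 -> exists T, Z = B *m T.
Proof.
move=> RmZ; have sBker : (B^T <= kermx Rm^T)%MS.
  by apply/sub_kermxP; rewrite -trmx_mul Rm_B trmx0.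
have sZB : (Z^T <= B^T)%MS.
  apply: submx_trans (_ : kermx Rm^T <= B^T)%MS.
    by apply/sub_kermxP; rewrite -trmx_mul RmZ trmx0.
  rewrite -(mxrank_leqif_sup sBker).2 mxrank_ker (eqP B_free) mxrank_tr (eqP Rm_free).
  by rewrite -dim_pr addnK.
by case/submxP: sZB => T ZBT; exists T^T; rewrite -[Z]trmxK ZBT trmx_mul trmxK.
Qed.

Lemma rls_eq_ols (Y : 'cV[R]_N) (th : 'cV[R]_n) : Rm *m th = 0 ->
  (forall th', Rm *m th' = 0 -> sqnorm (Y - chi *m th) <= sqnorm (Y - chi *m th')) ->
  th = B *m (invmx (X^T *m X) *m X^T *m Y).
Proof.
move=> Rm_th th_min; have [g th_Bg] := constraint_kernel_factor Rm_th.
rewrite th_Bg; congr (_ *m _); apply: ols_argmin_unique X_free _.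
by rewrite -!mulmxA -th_Bg; apply: th_min; rewrite mulmxA Rm_B mul0mx.
Qed.

Lemma constraint_gram_unit : Rm *m Gi *m Rm^T \in unitmx.
Proof.
have -> : Rm *m Gi *m Rm^T = (Rm *m Gi *m chi^T) *m (Rm *m Gi *m chi^T)^T.
  rewrite !trmx_mul trmxK Gi_sym !mulmxA -(mulmxA (Rm *m Gi) chi^T chi).
  by rewrite -(mulmxA (Rm *m Gi) (chi^T *m chi) Gi) mulmxV // mulmx1.
by apply: mul_tr_unit; rewrite !row_free_mul ?chi_free // row_free_unit unitmx_inv.
Qed.

(* The columns of [Proj *m Gi *m chi^T] lie in ker Rm = range B, and left
   multiplication by [B^T *m G], which is invariant under Proj, identifies the factor. *)
Lemma rls_projector : Proj *m Gi *m chi^T = B *m (invmx (X^T *m X) *m X^T).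
Proof.
have [T PGchi] : exists T, Proj *m Gi *m chi^T = B *m T.
  apply: constraint_kernel_factor.
  by rewrite !mulmxA mulmxBr mulmx1 !mulmxA mulmxV ?constraint_gram_unit // mul1mx subrr !mul0mx.
rewrite PGchi; congr (_ *m _).
have XX_unit : X^T *m X \in unitmx by rewrite -{2}[X]trmxK mul_tr_unit ?X_free.
set G := chi^T *m chi in PGchi *; set P := Proj in PGchi.
have BtGP : B^T *m G *m P = B^T *m G.
  rewrite /P mulmxBr mulmx1 (mulmxA _ Mr Rm) 2!mulmxA (mulmxK chi_gram_unit).
  by rewrite -trmx_mul Rm_B trmx0 !mul0mx subr0.
have XXT : X^T *m X *m T = X^T.
  have BtGPchi : B^T *m G *m (P *m invmx G *m chi^T) = X^T.
    rewrite (mulmxA _ (P *m invmx G)) (mulmxA _ P) BtGP (mulmxK chi_gram_unit).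
    by rewrite trmx_mul.
  by rewrite -[in RHS]BtGPchi PGchi trmx_mul /G !mulmxA.
by rewrite -(mulKmx XX_unit T) XXT.
Qed.

Lemma rls_sandwich (D : 'M[R]_N) :
  Proj *m (Gi *m chi^T *m D *m chi *m Gi) *m Proj^T =
  B *m (invmx (X^T *m X) *m X^T *m D *m X *m invmx (X^T *m X)) *m B^T.
Proof.
have -> : Proj *m (Gi *m chi^T *m D *m chi *m Gi) *m Proj^T =
    (Proj *m Gi *m chi^T) *m D *m (Proj *m Gi *m chi^T)^T.
  by rewrite !trmx_mul trmxK Gi_sym !mulmxA.
by rewrite rls_projector !trmx_mul !trmxK trmx_inv !trmx_mul !trmxK !mulmxA.
Qed.

End RestrictedLeastSquares.





Lemma nthS_in K (F : {set {set 'I_K}}) a : (a < #|F|)%N -> nthS F a \in F.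
Proof. by move=> ltaF; rewrite /nthS -mem_enum mem_nth // -cardE. Qed.

Lemma nthS_inj K (F : {set {set 'I_K}}) a a' : (a < #|F|)%N -> (a' < #|F|)%N ->
  nthS F a = nthS F a' -> a = a'.
Proof. by move=> ltaF lta'F /eqP; rewrite nth_uniq ?enum_uniq -?cardE // => /eqP. Qed.

Section FactorialDesign.
Variables (R : realFieldType) (N J K : nat).
Variables (W : 'I_N -> 'I_(2 ^ K)) (x : 'M[R]_(N, J)).
Variables (Fp Fp' : {set {set 'I_K}}).
Hypothesis Fp_sub : set0 \notin Fp.

Definition ols_factor_set (a : 'I_(1 + #|Fp|)) : {set 'I_K} := nth set0 (set0 :: enum Fp) a.

Definition ols_to_theta : 'M[R]_(ntheta J K, ncol J Fp Fp') :=
  (walsh_design J #|Fp'| ols_factor_set (nthS Fp'))^T.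

Lemma ols_factor_set_inj : injective ols_factor_set.
Proof.
move=> a a' /eqP; rewrite /ols_factor_set nth_uniq /= ?enum_uniq ?mem_enum ?Fp_sub -?cardE //.
by move/eqP/val_inj.
Qed.

Lemma sum_tind i (f : nat -> R) : \sum_(q < 2 ^ K) tind R W i q * f q = f (W i).
Proof.
rewrite (bigD1 (W i)) //= /tind eqxx mul1r big1 ?addr0 // => q neq.
by rewrite eq_sym (inj_eq val_inj) (negbTE neq) mul0r.
Qed.

Lemma Rres_walsh :
  Rres R J Fp Fp' =
  (2 / 2 ^+ K) *: walsh_design J #|Fm' Fp'| (fun a => nthS (Fm Fp) a) (nthS (Fm' Fp')).
Proof.
apply/matrixP => r c; rewrite -[r]splitK -[c]splitK.
case: (split r) => a; case: (split c) => q /=; rewrite [RHS]mxE.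
- by rewrite block_mxEul !mxE !split_lshift.
- by rewrite block_mxEur !mxE split_lshift split_rshift mulr0.
- by rewrite block_mxEdl !mxE split_lshift split_rshift mulr0.
- by rewrite block_mxEdr !mxE !split_rshift; case: ifP; rewrite ?mulr0.
Qed.

Lemma chiL_ols_to_theta : chiL W x *m ols_to_theta = Xdes W x Fp Fp'.
Proof.
apply/matrixP => i c; rewrite /ols_to_theta mxE big_split_ord /= -[c]splitK.
case: (split c) => [a|b] /=;
  under eq_bigr do rewrite !mxE ?split_lshift ?split_rshift ?row_mxEl ?row_mxEr !mxE;
  under [X in _ + X]eq_bigr do rewrite !mxE ?split_lshift ?split_rshift ?row_mxEl ?row_mxEr !mxE.
  rewrite [X in _ + X]big1 => [|k _]; last by rewrite mulr0.
  rewrite addr0 (sum_tind i (walsh R (ols_factor_set a))) mxE split_lshift -[a]splitK.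
  by case: (split a) => [o|a'] /=; rewrite ?split_lshift ?split_rshift ?(ord1 o) ?walsh0.
rewrite big1 => [|q _]; last by rewrite mulr0.
have Jgt0 := ord_mulJ_gt0 b.
pose g k := tind R W i (k %/ J) * xn x i (k %% J) * walsh R (nthS Fp' (b %/ J)) (k %/ J).
transitivity (\sum_(k < Qd K * J) if (b %% J == k %% J)%N then g k else 0).
  by rewrite add0r; apply: eq_bigr => k _; case: ifP; rewrite ?mulr0.
rewrite (sum_mod_eq _ g) ?ltn_mod //.
under eq_bigr do rewrite /g kron_index_div ?kron_index_mod ?ltn_mod // -mulrA.
rewrite (sum_tind i (fun q => xn x i (b %% J) * walsh R (nthS Fp' (b %/ J)) q)).
by rewrite mxE split_rshift mulrC.
Qed.

Lemma ols_factor_set_mem a : ols_factor_set a \in set0 :: enum Fp.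
Proof. by rewrite /ols_factor_set mem_nth //= -cardE. Qed.

Lemma Rres_ols_to_theta : Rres R J Fp Fp' *m ols_to_theta = 0.
Proof.
rewrite Rres_walsh -scalemxAl /ols_to_theta walsh_design_orth ?scaler0 //
  => [a a' | b b' ltb ltb'].
  have := nthS_in (ltn_ord a); rewrite !inE => /andP[nz notFp].
  have notin : nthS (Fm Fp) a \notin set0 :: enum Fp by rewrite in_cons mem_enum negb_or nz.
  by apply: (contraNneq _ notin) => ->; apply: ols_factor_set_mem.
have := nthS_in ltb; rewrite inE; apply: contraNneq => ->.
exact: nthS_in.
Qed.

Lemma natr_pow2_neq0 : ((2 ^ K)%:R : R) != 0.
Proof. by rewrite pnatr_eq0 expn_eq0. Qed.

Lemma ols_to_theta_free : row_free ols_to_theta^T.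
Proof.
rewrite /ols_to_theta trmxK; apply: scalar_gram_row_free natr_pow2_neq0.
by apply: walsh_design_gram => [|b b' ltb ltb']; [exact: ols_factor_set_inj | exact: nthS_inj].
Qed.

Lemma Rres_free : row_free (Rres R J Fp Fp').
Proof.
rewrite Rres_walsh /row_free mxrank_scale_nz ?mulf_neq0 ?invr_eq0 ?expf_neq0 ?pnatr_eq0 //.
apply: scalar_gram_row_free natr_pow2_neq0.
apply: walsh_design_gram => [a a' /(nthS_inj (ltn_ord a) (ltn_ord a')) /val_inj //|].
exact: nthS_inj.
Qed.

Lemma ncol_add_nconstraints : (ncol J Fp Fp' + (#|Fm Fp| + #|Fm' Fp'| * J))%N = ntheta J K.
Proof.
have cardFp : (1 + #|Fp| + #|Fm Fp| = 2 ^ K)%N.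
  rewrite -(card_subsets K) -(cardsC (Fm Fp)).
  have -> : ~: Fm Fp = set0 |: Fp.
    by apply/setP => S; rewrite !inE negb_and !negbK.
  by rewrite (cardsU1 set0 Fp) Fp_sub addnC.
have cardFp' : (#|Fp'| + #|Fm' Fp'| = 2 ^ K)%N.
  rewrite -(card_subsets K) -(cardsC Fp').
  by congr (_ + _)%N; apply: eq_card => S; rewrite !inE.
rewrite /ncol /ntheta /Qd -{1}cardFp -cardFp' mulnDl; lia.
Qed.

Lemma CSplus_ols_to_theta :
  CSplus R Fp *m usubmx ols_to_theta = 2 *: rowsub (posZ J Fp') 1%:M.
Proof.
apply/matrixP => a c; rewrite -[c]splitK !mxE; case: (split c) => [a'|b] /=.
  under eq_bigr do rewrite !mxE split_lshift row_mxEl mxE cK_walsh -(mulrA (2 / 2 ^+ K)).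
  rewrite -mulr_sumr walsh_orth.
  rewrite -[nthS Fp a]/(ols_factor_set (rshift 1 a)) (inj_eq ols_factor_set_inj).
  rewrite eq_lshift eq_sym.
  by case: eqP; rewrite ?mulr0 // mulr1 natrX mulfVK ?expf_neq0 ?pnatr_eq0.
rewrite big1 ?eq_lrshift ?mulr0 // => q _.
by rewrite mxE [usubmx _ _ _]mxE mxE block_mxEdl mxE mulr0.
Qed.

End FactorialDesign.

Theorem propositionS5 (R : realFieldType) (N J K : nat)
  (W : 'I_N -> 'I_(2 ^ K)) (x : 'M[R]_(N, J)) (Y : 'cV[R]_N)
  (Fp Fp' : {set {set 'I_K}})
  (Fp_sub : set0 \notin Fp) (Fp_nonempty : Fp != set0)
  (x_centered : forall j : 'I_J, \sum_(i < N) x i j = 0)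
  (chiL_nonsing : Gram W x \in unitmx)
  (thr : 'cV[R]_(ntheta J K)) (thr_RLS : is_RLS W x Y Fp Fp' thr) :
  tau_r_plus W x Y Fp Fp' = CSplus R Fp *m Yhat_rS thr /\
  Omega_r_plus W x Y Fp Fp' = CSplus R Fp *m Psi_rS W x Y Fp Fp' thr *m (CSplus R Fp)^T.
Proof.
case: thr_RLS => Rres_thr thr_min.
have RB := Rres_ols_to_theta R J Fp Fp'; have Rfree := Rres_free R J Fp Fp'.
have Bfree := @ols_to_theta_free R J K Fp Fp' Fp_sub.
have dims := @ncol_add_nconstraints J K Fp Fp' Fp_sub.
have thr_ols : thr = ols_to_theta R J Fp Fp' *m beta_ols W x Y Fp Fp'.
  by rewrite (rls_eq_ols chiL_nonsing RB Rfree Bfree dims Rres_thr thr_min) chiL_ols_to_theta.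
have res_thr : Y - chiL W x *m thr = res_ols W x Y Fp Fp'.
  by rewrite thr_ols mulmxA chiL_ols_to_theta.
split.
  rewrite /Yhat_rS thr_ols -mul_usub_mx mulmxA CSplus_ols_to_theta // -scalemxAl -rowsubE.
  by apply/colP => a; rewrite !mxE.
rewrite /Psi_rS /Sigma_r res_thr /Mr /Gram (rls_sandwich chiL_nonsing RB Rfree Bfree dims).
rewrite chiL_ols_to_theta -/(V_ehw W x Y Fp Fp') ulsubmx_mul_tr /Omega_r_plus.
move: (V_ehw W x Y Fp Fp') => V.
rewrite !mulmxA CSplus_ols_to_theta // -(mulmxA _ _ (CSplus R Fp)^T) -trmx_mul.
rewrite CSplus_ols_to_theta //.
rewrite linearZ /= -!scalemxAl -scalemxAr scalerA rowsub_conj.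
by apply/matrixP => a b; rewrite !mxE -natrM.
Qed.
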